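(* Let $X, Y$ be two infinite sets forming a partition of $\mathbb{N} = \{0,1,2,\ldots\}$, let $(x(n))_{n\geq 0}$ be the increasing enumeration of $X$ and $(y(n))_{n\geq0}$ the increasing enumeration of $Y$. Suppose that for all $n \geq 0$: $x(x(n)) = 2x(n)$, $y(y(n)) = 2y(n)$, and $|x(n) - y(n)| = 1$. Then either $x = a$ and $y = b$, or $x = b$ and $y = a$. In particular $(x(n)-y(n))_{n\geq 0}$ equals $(1-2t(n))_{n\geq0}$ or $(2t(n)-1)_{n\geq 0}$.
   Context: The Thue–Morse sequence $(t(n))_{n\geq 0}$ is defined by $t(0)=0$, $t(2n)=t(n)$, $t(2n+1)=1-t(n)$. A nonnegative integer is odious if the sum of its binary digits is odd and evil if it is even. $(a(n))_{n\geq0}$ is the increasing sequence of odious numbers and $(b(n))_{n\geq 0}$ the increasing sequence of evil numbers, both indexed from $0$. *)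

From mathcomp Require Import all_boot.
Set Implicit Arguments. Unset Strict Implicit. Unset Printing Implicit Defensive.

(* Thue-Morse: t 0 = 0, t (2n) = t n, t (2n+1) = 1 - t n. *)
Fixpoint tm_aux (fuel n : nat) : nat :=
  match fuel with
  | 0 => 0
  | fuel'.+1 => if n == 0 then 0
                else if odd n then 1 - tm_aux fuel' n./2 else tm_aux fuel' n./2
  end.
Definition t (n : nat) : nat := tm_aux n.+1 n.

Fixpoint digsum_aux (fuel n : nat) : nat :=
  match fuel with
  | 0 => 0
  | fuel'.+1 => if n == 0 then 0 else odd n + digsum_aux fuel' n./2
  end.
Definition bin_digit_sum (n : nat) : nat := digsum_aux n.+1 n.

Definition odious (n : nat) : bool := odd (bin_digit_sum n).
Definition evil (n : nat) : bool := ~~ odd (bin_digit_sum n).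

Definition increasing_enum (P : nat -> bool) (f : nat -> nat) : Prop :=
  (forall n, f n < f n.+1) /\ (forall m, P m <-> exists n, f n = m).

From mathcomp Require Import all_boot all_order all_algebra.
From mathcomp Require Import zify.
Import GRing.Theory Num.Theory.

(* Since x and y enumerate complementary sets and x(k), y(k) are adjacent,
   induction on n shows {x(n), y(n)} = {2n, 2n+1}: the numbers below 2n are
   exhausted by the smaller indices.  Hence x(n) = 2n + e(n) and
   y(n) = 2n + 1 - e(n) with e(n) in {0, 1}, and the doubling conditions turn
   into the Thue-Morse recursion e(2n) = e(n), e(2n+1) = 1 - e(n).  So e = t
   or e = 1 - t, and as t(m) is the parity of the binary digit sum of m,
   n |-> 2n + t(n) enumerates the evil numbers and n |-> 2n + 1 - t(n) the
   odious ones. *)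

Set Implicit Arguments.
Unset Strict Implicit.
Unset Printing Implicit Defensive.

Lemma tm_aux_fuel f g n : n < f -> n < g -> tm_aux f n = tm_aux g n.
Proof.
elim: f g n => [|f IH] [|g] n //= ltnf ltng.
case: eqP => // n_neq0; rewrite (IH g) //; lia.
Qed.

Lemma digsum_aux_fuel f g n : n < f -> n < g -> digsum_aux f n = digsum_aux g n.
Proof.
elim: f g n => [|f IH] [|g] n //= ltnf ltng.
case: eqP => // n_neq0; rewrite (IH g) //; lia.
Qed.

Lemma binary_ind (P : nat -> Prop) :
  P 0 -> (forall k, 0 < k -> P k -> P k.*2) -> (forall k, P k -> P k.*2.+1) ->
  forall m, P m.
Proof.
move=> P0 Peven Podd m; elim/ltn_ind: m => m IH.
case: (odd m) (odd_double_half m) => /= Em; rewrite -Em.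
- by apply: Podd; apply: IH; lia.
- case: (posnP m./2) => [->|hpos] //.
  by apply: Peven => //; apply: IH; lia.
Qed.

Lemma tm_auxS f n :
  tm_aux f.+1 n =
  if n == 0 then 0 else if odd n then 1 - tm_aux f n./2 else tm_aux f n./2.
Proof. by []. Qed.

Lemma digsum_auxS f n :
  digsum_aux f.+1 n = if n == 0 then 0 else odd n + digsum_aux f n./2.
Proof. by []. Qed.

Lemma t_double k : t k.*2 = t k.
Proof.
rewrite /t tm_auxS odd_double doubleK double_eq0.
case: eqP => [->|/eqP k_neq0] //; apply: tm_aux_fuel; lia.
Qed.

Lemma t_doubleS k : t k.*2.+1 = 1 - t k.
Proof.
have half_k : (k.*2.+1)./2 = k by lia.
rewrite {1}/t tm_auxS oddS odd_double half_k.
congr (_ - _); apply: tm_aux_fuel; lia.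
Qed.

Lemma bin_digit_sum_double k : bin_digit_sum k.*2 = bin_digit_sum k.
Proof.
rewrite /bin_digit_sum digsum_auxS odd_double doubleK double_eq0.
case: eqP => [->|/eqP k_neq0] //; apply: digsum_aux_fuel; lia.
Qed.

Lemma bin_digit_sum_doubleS k : bin_digit_sum k.*2.+1 = (bin_digit_sum k).+1.
Proof.
have half_k : (k.*2.+1)./2 = k by lia.
rewrite {1}/bin_digit_sum digsum_auxS oddS odd_double half_k.
congr _.+1; apply: digsum_aux_fuel; lia.
Qed.

Lemma t_le1 m : t m <= 1.
Proof. by elim/binary_ind: m => [|k _|k _] //; rewrite ?t_double ?t_doubleS ?leq_subr. Qed.

Lemma odd_bin_digit_sum m : odd (bin_digit_sum m) = (t m == 1).
Proof.
elim/binary_ind: m => [|k _ IH|k IH] //.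
- by rewrite bin_digit_sum_double t_double.
- rewrite bin_digit_sum_doubleS t_doubleS /= IH.
  by case: (t k) (t_le1 k) => [|[|]].
Qed.

Lemma evilE m : evil m = (t m == 0).
Proof. by rewrite /evil odd_bin_digit_sum; case: (t m) (t_le1 m) => [|[|]]. Qed.

Lemma odiousE m : odious m = (1 - t m == 0).
Proof. by rewrite /odious odd_bin_digit_sum; case: (t m) (t_le1 m) => [|[|]]. Qed.

Definition thue_morse_rec (g : nat -> nat) : Prop :=
  forall k, g k.*2 = g k /\ g k.*2.+1 = 1 - g k.

Lemma thue_morse_rec_t : thue_morse_rec t.
Proof. by move=> k; rewrite t_double t_doubleS. Qed.

Lemma thue_morse_rec_compl : thue_morse_rec (fun n => 1 - t n).
Proof. by move=> k; rewrite t_double t_doubleS; case: (t k) (t_le1 k) => [|[|]]. Qed.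

Lemma thue_morse_rec_uniq g1 g2 :
  thue_morse_rec g1 -> thue_morse_rec g2 -> g1 0 = g2 0 -> g1 =1 g2.
Proof.
move=> rec1 rec2 eq0 m; elim/binary_ind: m => [|k _ IH|k IH] //.
- by rewrite (rec1 k).1 (rec2 k).1.
- by rewrite (rec1 k).2 (rec2 k).2 IH.
Qed.

Lemma thue_morse_rec_le1 g : thue_morse_rec g -> g 0 <= 1 -> forall n, g n <= 1.
Proof.
move=> grec g0 m; elim/binary_ind: m => [|k _ IH|k IH] //.
- by rewrite (grec k).1.
- by rewrite (grec k).2 leq_subr.
Qed.

Lemma thue_morse_recP g : thue_morse_rec g -> g 0 <= 1 ->
  g =1 t \/ g =1 (fun n => 1 - t n).
Proof.
move=> grec; case g0: (g 0) => [|[|//]] _.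
- by left; apply: thue_morse_rec_uniq thue_morse_rec_t _.
- by right; apply: thue_morse_rec_uniq thue_morse_rec_compl _.
Qed.

Lemma increasing_enum_double_add (P : pred nat) (g f : nat -> nat) :
  thue_morse_rec g -> g 0 <= 1 -> (forall m, P m = (g m == 0)) ->
  (forall n, f n = n.*2 + g n) -> increasing_enum P f.
Proof.
move=> grec g0 Pg fE; have g_le1 := thue_morse_rec_le1 grec g0.
split=> [n|m]; first by rewrite !fE; have := g_le1 n; lia.
rewrite Pg; split.
- move=> /eqP gm0; exists m./2; rewrite fE.
  have mE := odd_double_half m; set k := m./2 in mE *.
  have [gE gS] := grec k; have := g_le1 k.
  by case: (odd m) mE => /= mE; move: gm0; rewrite -mE ?gE ?gS; lia.
- move=> [n <-]; rewrite fE.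
  by case: (g n) (g_le1 n) (grec n) => [|[|//]] _ [gE gS]; rewrite ?addn0 ?addn1 ?gE ?gS.
Qed.

Section ComplementaryEnumerations.

Variables (X : nat -> bool) (x y : nat -> nat).
Hypothesis enum_x : increasing_enum X x.
Hypothesis enum_y : increasing_enum (fun m => ~~ X m) y.
Hypothesis x_y_adjacent : forall n, x n = y n + 1 \/ y n = x n + 1.

Let x_mono : {homo x : m n / m < n} := homo_ltn ltn_trans enum_x.1.
Let y_mono : {homo y : m n / m < n} := homo_ltn ltn_trans enum_y.1.
Let X_x k : X (x k). Proof. by apply/enum_x.2; exists k. Qed.
Let notX_y k : ~~ X (y k). Proof. by apply/enum_y.2; exists k. Qed.

Lemma complementary_enum_pair n :
  (x n = n.*2 /\ y n = n.*2.+1) \/ (x n = n.*2.+1 /\ y n = n.*2).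
Proof.
elim/ltn_ind: n => n IH.
have cover m : m < n.*2 -> exists2 k, k < n & x k = m \/ y k = m.
  by move=> ltm; exists m./2; [lia | have := IH m./2; lia].
have x_ge : n.*2 <= x n.
  rewrite leqNgt; apply/negP => /cover [k ltkn [xk|yk]].
  - by have := x_mono ltkn; lia.
  - by have := notX_y k; rewrite yk X_x.
have y_ge : n.*2 <= y n.
  rewrite leqNgt; apply/negP => /cover [k ltkn [xk|yk]].
  - by have := notX_y n; rewrite -xk X_x.
  - by have := y_mono ltkn; lia.
have := x_y_adjacent n; case: (boolP (X n.*2)) => [/enum_x.2|/enum_y.2] [j fj].
- case: (ltngtP j n) => [ltjn|ltnj|eqjn]; last by subst j; lia.
  + by have := IH j ltjn; lia.
  + by have := x_mono ltnj; lia.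
- case: (ltngtP j n) => [ltjn|ltnj|eqjn]; last by subst j; lia.
  + by have := IH j ltjn; lia.
  + by have := y_mono ltnj; lia.
Qed.

Hypothesis x_doubling : forall n, x (x n) = 2 * x n.
Hypothesis y_doubling : forall n, y (y n) = 2 * y n.

Lemma thue_morse_rec_enum_offset : thue_morse_rec (fun n => x n - n.*2).
Proof.
move=> n; move: (x_doubling n) (y_doubling n).
have := complementary_enum_pair n.*2; have := complementary_enum_pair n.*2.+1.
by case: (complementary_enum_pair n) => [[-> ->]|[-> ->]]; lia.
Qed.

End ComplementaryEnumerations.

Local Open Scope ring_scope.

Theorem theorem4 (X : nat -> bool) (x y : nat -> nat) :
  (exists f : nat -> nat, forall n, (n < f n)%N /\ X (f n)) ->
  (exists f : nat -> nat, forall n, (n < f n)%N /\ ~~ X (f n)) ->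
  increasing_enum X x ->
  increasing_enum (fun m => ~~ X m) y ->
  (forall n, x (x n) = (2 * x n)%N) ->
  (forall n, y (y n) = (2 * y n)%N) ->
  (forall n, `|(x n)%:Z - (y n)%:Z| = 1) ->
  ((increasing_enum odious x /\ increasing_enum evil y) \/
   (increasing_enum evil x /\ increasing_enum odious y)) /\
  ((forall n, (x n)%:Z - (y n)%:Z = 1 - 2 * (t n)%:Z) \/
   (forall n, (x n)%:Z - (y n)%:Z = 2 * (t n)%:Z - 1)).
Proof.
(* The infinitude hypotheses are implied by the enumerations being total. *)
move=> _ _ enum_x enum_y x_doubling y_doubling x_y_dist.
have adjacent n : (x n = y n + 1 \/ y n = x n + 1)%N by have := x_y_dist n; lia.
have pair := complementary_enum_pair enum_x enum_y adjacent.
have offset_rec := thue_morse_rec_enum_offset enum_x enum_y adjacent x_doubling y_doubling.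
have offset0 : (x 0 - 0.*2 <= 1)%N by have := pair 0%N; lia.
case: (thue_morse_recP offset_rec offset0) => offsetE; split.
- right; split.
  + apply: increasing_enum_double_add thue_morse_rec_t _ evilE _ => // n.
    by have := offsetE n; have := pair n; lia.
  + apply: increasing_enum_double_add thue_morse_rec_compl _ odiousE _ => // n.
    by have := offsetE n; have := pair n; have := t_le1 n; lia.
- by right=> n; have := offsetE n; have := pair n; have := t_le1 n; lia.
- left; split.
  + apply: increasing_enum_double_add thue_morse_rec_compl _ odiousE _ => // n.
    by have := offsetE n; have := pair n; have := t_le1 n; lia.
  + apply: increasing_enum_double_add thue_morse_rec_t _ evilE _ => // n.
    by have := offsetE n; have := pair n; have := t_le1 n; lia.
- by left=> n; have := offsetE n; have := pair n; have := t_le1 n; lia.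
Qed.
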